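(* Let $\mathcal{R}_1,\mathcal{R}_2$ be finite consistent sets of probabilistic constraints over propositional languages $\mathcal{L}_1,\mathcal{L}_2$ respectively, with $\mathrm{sig}(\mathcal{L}_1)\cap\mathrm{sig}(\mathcal{L}_2)=\emptyset$, and let $\mathcal{R}=\mathcal{R}_1\cup\mathcal{R}_2$, viewed over the language $\mathcal{L}$ with $\mathrm{sig}(\mathcal{L})=\mathrm{sig}(\mathcal{L}_1)\cup\mathrm{sig}(\mathcal{L}_2)$. Identifying $\mathrm{Int}(\mathcal{L})$ with $\mathrm{Int}(\mathcal{L}_1)\times\mathrm{Int}(\mathcal{L}_2)$, we have $P^{ME}_{\mathcal{R}}(v_1,v_2)=P^{ME}_{\mathcal{R}_1}(v_1)\cdot P^{ME}_{\mathcal{R}_2}(v_2)$ for all $v_1,v_2$. In particular, the marginals satisfy $P^{ME}_{\mathcal{R}}(v_i)=P^{ME}_{\mathcal{R}_i}(v_i)$ for all $v_i\in\mathrm{Int}(\mathcal{L}_i)$, $i\in\{1,2\}$.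
   Context: For a propositional language $\mathcal{L}$ over a finite set $\mathrm{sig}(\mathcal{L})$ of variables, $\mathrm{Int}(\mathcal{L})$ is the set of truth assignments. A probability distribution over $\mathcal{L}$ is $P:\mathrm{Int}(\mathcal{L})\to[0,1]$ summing to $1$, with $P(\phi)=\sum_{v\models\phi}P(v)$. A probabilistic constraint over $\mathcal{L}$ is $c_0+\sum_{i=1}^k c_i\,\mathsf{p}(\phi_i)\ge 0$ ($c_i\in\mathbb{R}$, $\phi_i\in\mathcal{L}$), satisfied by $P$ iff $c_0+\sum_ic_iP(\phi_i)\ge0$; $\mathrm{Mod}(\mathcal{R})$ is the set of distributions satisfying all constraints of $\mathcal{R}$, and $\mathcal{R}$ is consistent iff this set is nonempty; then $P^{ME}_{\mathcal{R}}$ is the unique element of $\mathrm{Mod}(\mathcal{R})$ maximizing the entropy $H(P)=-\sum_vP(v)\log P(v)$. *)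

From HB Require Import structures.
From mathcomp Require Import all_boot all_order all_algebra.
From mathcomp Require Import reals exp.
From Stdlib Require List.
Set Implicit Arguments. Unset Strict Implicit. Unset Printing Implicit Defensive.
Import Order.TTheory GRing.Theory Num.Theory.
Local Open Scope ring_scope.

Inductive form (V : Type) : Type :=
| FVar of V
| FTop
| FBot
| FNeg of form V
| FAnd of form V & form V
| FOr of form V & form V.
Arguments FTop {V}. Arguments FBot {V}.

Definition interp (V : finType) := {ffun V -> bool}.

Fixpoint sat (V : finType) (v : interp V) (phi : form V) : bool :=
  match phi with
  | FVar x => v x
  | FTop => true
  | FBot => false
  | FNeg p => ~~ sat v p
  | FAnd p q => sat v p && sat v q
  | FOr p q => sat v p || sat v q
  end.

(* Renaming of variables (used to view formulas of L_i as formulas of L). *)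
Fixpoint frename (V W : Type) (f : V -> W) (phi : form V) : form W :=
  match phi with
  | FVar x => FVar (f x)
  | FTop => FTop
  | FBot => FBot
  | FNeg p => FNeg (frename f p)
  | FAnd p q => FAnd (frename f p) (frename f q)
  | FOr p q => FOr (frename f p) (frename f q)
  end.

Section Prob.
Variable R : realType.

Definition distr (V : finType) := interp V -> R.

Definition is_distr (V : finType) (P : distr V) : Prop :=
  (forall v, 0 <= P v) /\ \sum_(v : interp V) P v = 1.

Definition prob (V : finType) (P : distr V) (phi : form V) : R :=
  \sum_(v : interp V | sat v phi) P v.

(* Probabilistic constraint  c0 + sum_i c_i p(phi_i) >= 0. *)
Record constraint (V : Type) := Constraint {
  c0 : R;
  cterms : seq (R * form V) }.

Definition csat (V : finType) (P : distr V) (c : constraint V) : Prop :=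
  0 <= c0 c + \sum_(t <- cterms c) t.1 * prob P t.2.

Definition Mod (V : finType) (Rs : seq (constraint V)) (P : distr V) : Prop :=
  is_distr P /\ forall c, List.In c Rs -> csat P c.

Definition consistent (V : finType) (Rs : seq (constraint V)) : Prop :=
  exists P, Mod Rs P.

(* Entropy H(P) = - sum_v P(v) log P(v)  (with 0 log 0 = 0, since ln 0 = 0). *)
Definition entropy (V : finType) (P : distr V) : R :=
  - \sum_(v : interp V) P v * ln (P v).

(* P is the maximum entropy distribution of Rs (unique when Rs is consistent). *)
Definition is_ME (V : finType) (Rs : seq (constraint V)) (P : distr V) : Prop :=
  Mod Rs P /\ forall Q, Mod Rs Q -> entropy Q <= entropy P.

Definition crename (V W : Type) (f : V -> W) (c : constraint V) : constraint W :=
  Constraint (c0 c) [seq (t.1, frename f t.2) | t <- cterms c].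

End Prob.

(* Identification Int(L1) x Int(L2) ~ Int(L) with sig(L) = V1 + V2. *)
Definition join (V1 V2 : finType) (v1 : interp V1) (v2 : interp V2)
  : interp (V1 + V2)%type :=
  [ffun x => match x with inl a => v1 a | inr b => v2 b end].

Definition union_constraints (R : realType) (V1 V2 : finType)
  (R1 : seq (constraint R V1)) (R2 : seq (constraint R V2))
  : seq (constraint R (V1 + V2)%type) :=
  [seq crename inl c | c <- R1] ++ [seq crename inr c | c <- R2].

From mathcomp Require Import all_boot all_order all_algebra.
From mathcomp Require Import reals exp.
From mathcomp Require Import ring lra.
From Stdlib Require List.
Set Implicit Arguments. Unset Strict Implicit. Unset Printing Implicit Defensive.
Import Order.TTheory GRing.Theory Num.Theory.
Local Open Scope ring_scope.

(* Let P_l and P_r be the marginals of P. A constraint of R1 only sees the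
   left marginal and one of R2 only the right one, so P_l and P_r are models
   of R1 and R2, and the product P1 x P2 is a model of R1 u R2. Gibbs'
   inequality yields subadditivity H(P) <= H(P_l) + H(P_r), with equality only
   if P = P_l x P_r. Hence
     H(P1) + H(P2) = H(P1 x P2) <= H(P) <= H(P_l) + H(P_r) <= H(P1) + H(P2),
   so the marginals have maximal entropy, which forces P_l = P1 and P_r = P2
   (the midpoint of two distinct maximisers would have larger entropy, again
   by Gibbs), and P = P_l x P_r = P1 x P2. *)

Section Gibbs.
Variable R : realType.

(* Summand of the relative entropy D(p || q), shifted by q - p so that it is
   nonnegative termwise. *)
Definition kl_term (p q : R) : R := q - p + p * ln p - p * ln q.

Lemma kl_term_id (p : R) : kl_term p p = 0.
Proof. by rewrite /kl_term; ring. Qed.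

Lemma ln_lt_subr1 (t : R) : 0 < t -> t != 1 -> ln t < t - 1.
Proof.
move=> t_gt0 t_neq1; have lnt_neq0 : ln t != 0 by rewrite ln_eq0.
by have := expR_gt1Dx lnt_neq0; rewrite lnK ?posrE //; lra.
Qed.

Lemma kl_term_gt0 (p q : R) : 0 <= p -> 0 <= q -> (0 < p -> 0 < q) ->
  p != q -> 0 < kl_term p q.
Proof.
move=> p_ge0 q_ge0 supp pq; have [p0|p_gt0] := eqVneq p 0.
  have q_gt0 : 0 < q by rewrite lt_def q_ge0 andbT eq_sym -p0.
  by rewrite /kl_term p0 !mul0r; lra.
have {}p_gt0 : 0 < p by rewrite lt_def p_gt0.
have q_gt0 := supp p_gt0.
have t_gt0 : 0 < q / p by rewrite divr_gt0.
have t_neq1 : q / p != 1.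
  by apply: contra pq => /eqP qp; rewrite -(divfK (lt0r_neq0 p_gt0) q) qp mul1r.
have lnt : ln (q / p) = ln q - ln p by rewrite ln_div.
have E : kl_term p q = p * ((q / p - 1) - ln (q / p)).
  by rewrite /kl_term lnt; field; rewrite gt_eqF.
rewrite E mulr_gt0 // subr_gt0; exact: ln_lt_subr1.
Qed.

Lemma kl_term_ge0 (p q : R) : 0 <= p -> 0 <= q -> (0 < p -> 0 < q) ->
  0 <= kl_term p q.
Proof.
move=> p_ge0 q_ge0 supp; have [->|pq] := eqVneq p q; first by rewrite kl_term_id.
exact/ltW/kl_term_gt0.
Qed.

Section Sum.
Variables (I : finType) (p q : I -> R).
Hypotheses (p_ge0 : forall i, 0 <= p i) (q_ge0 : forall i, 0 <= q i).
Hypothesis supp : forall i, 0 < p i -> 0 < q i.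

Lemma sum_kl_term_ge0 : 0 <= \sum_i kl_term (p i) (q i).
Proof. by apply: sumr_ge0 => i _; apply: kl_term_ge0 (@supp i). Qed.

Lemma sum_kl_term_le0 : \sum_i kl_term (p i) (q i) <= 0 -> p =1 q.
Proof.
move=> le0 i; apply/eqP; apply: contraT => pq.
have ge0 j : 0 <= kl_term (p j) (q j) := kl_term_ge0 (p_ge0 j) (q_ge0 j) (@supp j).
have sum0 : \sum_j kl_term (p j) (q j) = 0.
  by apply/eqP; rewrite eq_le le0 sum_kl_term_ge0.
have := kl_term_gt0 (p_ge0 i) (q_ge0 i) (@supp i) pq.
by rewrite (psumr_eq0P (fun j _ => ge0 j) sum0) ?ltxx.
Qed.

End Sum.

Lemma mul_lnM (w a b : R) : 0 <= w -> (0 < w -> 0 < a) -> (0 < w -> 0 < b) ->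
  w * ln (a * b) = w * ln a + w * ln b.
Proof.
move=> w_ge0 a_gt0 b_gt0; have [->|w_neq0] := eqVneq w 0; first by rewrite !mul0r addr0.
have w_gt0 : 0 < w by rewrite lt_def w_neq0.
by rewrite lnM ?mulrDr ?posrE ?a_gt0 ?b_gt0.
Qed.

End Gibbs.

Section Marginals.
Variables (R : realType) (V1 V2 : finType).
Implicit Types (P : distr R (V1 + V2)%type).

Definition restrl (v : interp (V1 + V2)%type) : interp V1 := [ffun a => v (inl a)].
Definition restrr (v : interp (V1 + V2)%type) : interp V2 := [ffun b => v (inr b)].

Lemma restrl_join (v1 : interp V1) (v2 : interp V2) : restrl (join v1 v2) = v1.
Proof. by apply/ffunP => a; rewrite !ffunE. Qed.

Lemma restrr_join (v1 : interp V1) (v2 : interp V2) : restrr (join v1 v2) = v2.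
Proof. by apply/ffunP => b; rewrite !ffunE. Qed.

Lemma join_restr v : join (restrl v) (restrr v) = v.
Proof. by apply/ffunP => -[a|b]; rewrite !ffunE. Qed.

Lemma big_join (M : nmodType) (F : interp (V1 + V2)%type -> M) :
  \sum_v F v = \sum_(v1 : interp V1) \sum_(v2 : interp V2) F (join v1 v2).
Proof.
rewrite pair_big (reindex (fun w : interp V1 * interp V2 => join w.1 w.2)) //=.
exists (fun v => (restrl v, restrr v)) => [[v1 v2] _|v _] /=.
  by rewrite restrl_join restrr_join.
by rewrite join_restr.
Qed.

Definition margl P : distr R V1 := fun v1 => \sum_(v2 : interp V2) P (join v1 v2).
Definition margr P : distr R V2 := fun v2 => \sum_(v1 : interp V1) P (join v1 v2).

Lemma is_distr_margl P : is_distr P -> is_distr (margl P).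
Proof.
case=> P_ge0 P_sum1; split; first by move=> v1; apply: sumr_ge0.
by rewrite -P_sum1 big_join.
Qed.

Lemma is_distr_margr P : is_distr P -> is_distr (margr P).
Proof.
case=> P_ge0 P_sum1; split; first by move=> v2; apply: sumr_ge0.
by rewrite -P_sum1 big_join exchange_big.
Qed.

Lemma margl_gt0 P v1 v2 : is_distr P -> 0 < P (join v1 v2) -> 0 < margl P v1.
Proof.
case=> P_ge0 _ P_gt0; apply: lt_le_trans P_gt0 _.
by rewrite /margl (bigD1 v2) //= lerDl sumr_ge0.
Qed.

Lemma margr_gt0 P v1 v2 : is_distr P -> 0 < P (join v1 v2) -> 0 < margr P v2.
Proof.
case=> P_ge0 _ P_gt0; apply: lt_le_trans P_gt0 _.
by rewrite /margr (bigD1 v1) //= lerDl sumr_ge0.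
Qed.

Lemma sat_frename_inl (v1 : interp V1) (v2 : interp V2) phi :
  sat (join v1 v2) (frename inl phi) = sat v1 phi.
Proof. by elim: phi => //= [x|p -> |p -> q ->|p -> q ->]; rewrite ?ffunE. Qed.

Lemma sat_frename_inr (v1 : interp V1) (v2 : interp V2) phi :
  sat (join v1 v2) (frename inr phi) = sat v2 phi.
Proof. by elim: phi => //= [x|p -> |p -> q ->|p -> q ->]; rewrite ?ffunE. Qed.

Lemma prob_frename_inl P phi : prob P (frename inl phi) = prob (margl P) phi.
Proof.
rewrite /prob big_mkcond big_join [RHS]big_mkcond; apply: eq_bigr => v1 _.
under eq_bigr => v2 _ do rewrite sat_frename_inl.
by case: (sat v1 phi); rewrite // big1.
Qed.

Lemma prob_frename_inr P phi : prob P (frename inr phi) = prob (margr P) phi.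
Proof.
rewrite /prob big_mkcond big_join exchange_big [RHS]big_mkcond.
apply: eq_bigr => v2 _; under eq_bigr => v1 _ do rewrite sat_frename_inr.
by case: (sat v2 phi); rewrite // big1.
Qed.

Lemma csat_crename_inl P c : csat P (crename inl c) <-> csat (margl P) c.
Proof. by rewrite /csat /= big_map; under eq_bigr => t _ do rewrite prob_frename_inl. Qed.

Lemma csat_crename_inr P c : csat P (crename inr c) <-> csat (margr P) c.
Proof. by rewrite /csat /= big_map; under eq_bigr => t _ do rewrite prob_frename_inr. Qed.

Lemma Mod_union_constraints (R1 : seq (constraint R V1)) (R2 : seq (constraint R V2)) P :
  is_distr P ->
  Mod (union_constraints R1 R2) P <-> Mod R1 (margl P) /\ Mod R2 (margr P).
Proof.
move=> P_distr; split.
  case=> _ P_sat; split; split.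
  - exact: is_distr_margl.
  - move=> c c_in; apply/csat_crename_inl/P_sat/List.in_or_app; left.
    exact: List.in_map.
  - exact: is_distr_margr.
  - move=> c c_in; apply/csat_crename_inr/P_sat/List.in_or_app; right.
    exact: List.in_map.
case=> [[_ sat1] [_ sat2]]; split=> // c c_in.
have [|] := List.in_app_or _ _ _ c_in => /List.in_map_iff[d [<- d_in]].
  exact/csat_crename_inl/sat1.
exact/csat_crename_inr/sat2.
Qed.

Definition prod_distr (P1 : distr R V1) (P2 : distr R V2) : distr R (V1 + V2)%type :=
  fun v => P1 (restrl v) * P2 (restrr v).

Lemma prod_distr_join (P1 : distr R V1) (P2 : distr R V2) v1 v2 :
  prod_distr P1 P2 (join v1 v2) = P1 v1 * P2 v2.
Proof. by rewrite /prod_distr restrl_join restrr_join. Qed.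

Lemma is_distr_prod (P1 : distr R V1) (P2 : distr R V2) :
  is_distr P1 -> is_distr P2 -> is_distr (prod_distr P1 P2).
Proof.
move=> [P1_ge0 P1_sum1] [P2_ge0 P2_sum1].
split=> [v|]; first by rewrite mulr_ge0.
rewrite big_join -P1_sum1; apply: eq_bigr => v1 _.
by under eq_bigr => v2 _ do rewrite prod_distr_join; rewrite -mulr_sumr P2_sum1 mulr1.
Qed.

Lemma margl_prod (P1 : distr R V1) (P2 : distr R V2) :
  is_distr P2 -> margl (prod_distr P1 P2) = P1.
Proof.
case=> _ P2_sum1; apply: boolp.funext => v1; rewrite /margl.
by under eq_bigr => v2 _ do rewrite prod_distr_join; rewrite -mulr_sumr P2_sum1 mulr1.
Qed.

Lemma margr_prod (P1 : distr R V1) (P2 : distr R V2) :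
  is_distr P1 -> margr (prod_distr P1 P2) = P2.
Proof.
case=> _ P1_sum1; apply: boolp.funext => v2; rewrite /margr.
by under eq_bigr => v1 _ do rewrite prod_distr_join; rewrite -mulr_suml P1_sum1 mul1r.
Qed.

Section Subadditivity.
Variable P : distr R (V1 + V2)%type.
Hypothesis P_distr : is_distr P.
Local Notation Q := (prod_distr (margl P) (margr P)).

Let Q_ge0 v : 0 <= Q v.
Proof. by case: (is_distr_prod (is_distr_margl P_distr) (is_distr_margr P_distr)). Qed.

Let supp_PQ v : 0 < P v -> 0 < Q v.
Proof.
rewrite -(join_restr v) prod_distr_join => P_gt0.
by rewrite mulr_gt0 ?(margl_gt0 P_distr P_gt0) ?(margr_gt0 P_distr P_gt0).
Qed.

Lemma sum_kl_term_prod_marg :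
  \sum_v kl_term (P v) (Q v) = entropy (margl P) + entropy (margr P) - entropy P.
Proof.
have [P_ge0 P_sum1] := P_distr.
have [_ Q_sum1] := is_distr_prod (is_distr_margl P_distr) (is_distr_margr P_distr).
have cross : \sum_v P v * ln (Q v) = - entropy (margl P) - entropy (margr P).
  rewrite big_join /entropy !opprK.
  under eq_bigr => v1 _.
    under eq_bigr => v2 _ do rewrite prod_distr_join (mul_lnM (P_ge0 _)
      (margl_gt0 P_distr) (margr_gt0 P_distr)).
    by rewrite big_split /= -mulr_suml; over.
  rewrite big_split /= exchange_big /=.
  by under [X in _ + X]eq_bigr do rewrite -mulr_suml.
rewrite /kl_term !(sumrB, big_split) /= Q_sum1 P_sum1 cross /entropy; ring.
Qed.

Lemma entropy_subadditive : entropy P <= entropy (margl P) + entropy (margr P).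
Proof.
have := sum_kl_term_ge0 (proj1 P_distr) Q_ge0 supp_PQ.
by rewrite sum_kl_term_prod_marg subr_ge0.
Qed.

Lemma entropy_additive_prod_marg :
  entropy (margl P) + entropy (margr P) <= entropy P -> P =1 Q.
Proof.
rewrite -subr_le0 -sum_kl_term_prod_marg.
exact: sum_kl_term_le0 (proj1 P_distr) Q_ge0 supp_PQ.
Qed.

End Subadditivity.

Lemma entropy_prod (P1 : distr R V1) (P2 : distr R V2) :
  is_distr P1 -> is_distr P2 -> entropy (prod_distr P1 P2) = entropy P1 + entropy P2.
Proof.
move=> P1_distr P2_distr; have Q_distr := is_distr_prod P1_distr P2_distr.
have := sum_kl_term_prod_marg Q_distr.
rewrite margl_prod // margr_prod // big1 => [|v _]; last exact: kl_term_id.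
by move/eqP; rewrite eq_sym subr_eq0 => /eqP.
Qed.

End Marginals.

Section MaxEntropy.
Variables (R : realType) (V : finType) (Rs : seq (constraint R V)).

Definition midpoint (A B : distr R V) : distr R V := fun v => (A v + B v) / 2.

Lemma prob_midpoint (A B : distr R V) phi :
  prob (midpoint A B) phi = (prob A phi + prob B phi) / 2.
Proof. by rewrite /prob -mulr_suml big_split. Qed.

Lemma Mod_midpoint (A B : distr R V) : Mod Rs A -> Mod Rs B -> Mod Rs (midpoint A B).
Proof.
move=> [[A_ge0 A_sum1] A_sat] [[B_ge0 B_sum1] B_sat]; split; first split.
- by move=> v; rewrite divr_ge0 ?addr_ge0.
- by rewrite -mulr_suml big_split /= A_sum1 B_sum1; lra.
move=> c c_in; rewrite /csat.
under eq_bigr => t _ do rewrite prob_midpoint mulrA mulrDr mulrDl.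
rewrite big_split /= -!mulr_suml.
by have := A_sat c c_in; have := B_sat c c_in; rewrite /csat; lra.
Qed.

Lemma is_ME_unique (A B : distr R V) :
  Mod Rs A -> is_ME Rs B -> entropy B <= entropy A -> A =1 B.
Proof.
move=> A_mod [B_mod B_max] le_BA.
have le_MB := B_max _ (Mod_midpoint A_mod B_mod).
have [[A_ge0 _] _] := A_mod; have [[B_ge0 _] _] := B_mod.
have M_ge0 v : 0 <= midpoint A B v by rewrite divr_ge0 ?addr_ge0.
have supp_AM v : 0 < A v -> 0 < midpoint A B v.
  by move=> A_gt0; have := B_ge0 v; rewrite /midpoint; lra.
have supp_BM v : 0 < B v -> 0 < midpoint A B v.
  by move=> B_gt0; have := A_ge0 v; rewrite /midpoint; lra.
have sum_kl : \sum_v kl_term (A v) (midpoint A B v)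
    + \sum_v kl_term (B v) (midpoint A B v)
    = 2 * entropy (midpoint A B) - entropy A - entropy B.
  have kl_AB v : kl_term (A v) (midpoint A B v) + kl_term (B v) (midpoint A B v)
      = A v * ln (A v) + B v * ln (B v) - 2 * (midpoint A B v * ln (midpoint A B v)).
    by rewrite /kl_term /midpoint; field.
  rewrite -big_split /=; under eq_bigr => v _ do rewrite kl_AB.
  by rewrite sumrB big_split -mulr_sumr /entropy /=; ring.
have klA := sum_kl_term_ge0 A_ge0 M_ge0 supp_AM.
have klB := sum_kl_term_ge0 B_ge0 M_ge0 supp_BM.
have AM := sum_kl_term_le0 A_ge0 M_ge0 supp_AM.
have BM := sum_kl_term_le0 B_ge0 M_ge0 supp_BM.
by move=> v; rewrite AM ?BM //; lra.
Qed.

End MaxEntropy.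

Theorem lemma2 (R : realType) (V1 V2 : finType)
  (R1 : seq (constraint R V1)) (R2 : seq (constraint R V2))
  (P1 : distr R V1) (P2 : distr R V2) (P : distr R (V1 + V2)%type) :
  consistent R1 -> consistent R2 ->
  is_ME R1 P1 -> is_ME R2 P2 -> is_ME (union_constraints R1 R2) P ->
  (forall v1 v2, P (join v1 v2) = P1 v1 * P2 v2) /\
  (forall v1, \sum_(v2 : interp V2) P (join v1 v2) = P1 v1) /\
  (forall v2, \sum_(v1 : interp V1) P (join v1 v2) = P2 v2).
Proof.
move=> _ _ P1_ME P2_ME [P_mod P_max].
have [[P1_distr _] _] := P1_ME; have [[P2_distr _] _] := P2_ME.
have P_distr := proj1 P_mod.
have [Pl_mod Pr_mod] := (Mod_union_constraints R1 R2 P_distr).1 P_mod.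
have Q_mod : Mod (union_constraints R1 R2) (prod_distr P1 P2).
  apply/(Mod_union_constraints _ _ (is_distr_prod P1_distr P2_distr)).
  by rewrite margl_prod // margr_prod //; split; [case: P1_ME | case: P2_ME].
have le_QP := P_max _ Q_mod; rewrite entropy_prod // in le_QP.
have le_PlP1 := P1_ME.2 _ Pl_mod; have le_PrP2 := P2_ME.2 _ Pr_mod.
have le_PPlr := entropy_subadditive P_distr.
have margl_P := is_ME_unique Pl_mod P1_ME ltac:(lra).
have margr_P := is_ME_unique Pr_mod P2_ME ltac:(lra).
have P_prod := entropy_additive_prod_marg P_distr ltac:(lra).
split; last split; [move=> v1 v2 | exact: margl_P | exact: margr_P].
by rewrite P_prod prod_distr_join margl_P margr_P.
Qed.
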